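(* In the HTLC setting described in the context, if $\mathcal{A}$ follows her prescribed behavior, then $\mathcal{B}$ can bribe the miners at a cost of $\frac{f^{h}_{\mathcal{A}}-f}{\lambda_{\min}}+f$; that is, if $\mathcal{B}$ publishes $tx^{h}_{\mathcal{B}}$ with fee $f^{h}_{\mathcal{B}}>\frac{f^{h}_{\mathcal{A}}-f}{\lambda_{\min}}+f$, then the subgame perfect equilibrium of the game $G^{H}(1,\mathrm{red})$ is for all miners to include unrelated transactions in rounds $1,\dots,T-1$ and to include $\mathcal{B}$'s transaction $tx^{h}_{\mathcal{B}}$ in round $T$.
   Context: Blockchain model: $n$ miners; miner $i$ has mining power $\lambda_i>0$, $\sum_i\lambda_i=1$, $\lambda_{\min}=\min_i\lambda_i$. Each round exactly one miner is chosen, miner $i$ with probability $\lambda_i$, and creates a block containing one transaction of her choice, receiving its fee. An unrelated transaction offering base fee $f$ is always available. A contract can be redeemed at most once. Miners are rational, non-myopic, with perfect information, maximizing expected tokens at the end of the game. HTLC: a contract holding $v^{\mathrm{dep}}$ tokens initiated in block $b_j$, with digest $dig_a=H(pre_a)$ and timeout $T$, redeemable via htlc-A (signature of $\mathcal{A}$ and $pre_a$; any block) or htlc-B (signature of $\mathcal{B}$; only in a block at least $T$ blocks after initiation). Prescribed behavior of $\mathcal{A}$: if she knows $pre_a$, she publishes, right after block $b_j$ (i.e. in the first round), a transaction $tx^{h}_{\mathcal{A}}$ redeeming the HTLC via htlc-A with fee $f^{h}_{\mathcal{A}}$, $f<f^{h}_{\mathcal{A}}<v^{\mathrm{dep}}$.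 $\mathcal{B}$'s transaction $tx^{h}_{\mathcal{B}}$ redeems via htlc-B with fee $f^{h}_{\mathcal{B}}$, $f<f^{h}_{\mathcal{B}}<v^{\mathrm{dep}}$. The HTLC game has $T$ rounds creating $b_{j+1},\dots,b_{j+T}$; a miner can include an unrelated transaction in any round, $tx^{h}_{\mathcal{A}}$ in any round while the HTLC is unredeemed, and $tx^{h}_{\mathcal{B}}$ only in round $T$ while the HTLC is unredeemed. $G^{H}(k,s)$ is the subgame just before round $k$ with the HTLC redeemable ($\mathrm{red}$) or not; the full game is $G^{H}(1,\mathrm{red})$. *)

From HB Require Import structures.
From mathcomp Require Import all_boot all_order all_algebra.
Set Implicit Arguments. Unset Strict Implicit. Unset Printing Implicit Defensive.
Import Order.TTheory GRing.Theory Num.Theory.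
Local Open Scope ring_scope.

(** Transactions a miner may put in her block:
    [Unrel] = unrelated transaction (fee f), [IncA] = tx^h_A (fee f^h_A),
    [IncB] = tx^h_B (fee f^h_B). *)
Inductive action := Unrel | IncA | IncB.

Definition action_eqb (a b : action) : bool :=
  match a, b with
  | Unrel, Unrel | IncA, IncA | IncB, IncB => true | _, _ => false end.
Lemma action_eqP : Equality.axiom action_eqb.
Proof. by case; case; constructor. Qed.
HB.instance Definition _ := hasDecEq.Build action action_eqP.

(** Feasibility of action [a] in round [k] (1 <= k <= T) when the HTLC state
    is [s] (true = redeemable): unrelated always; tx_A while unredeemed;
    tx_B only in round T while unredeemed. *)
Definition feasible (T k : nat) (s : bool) (a : action) : bool :=
  match a with
  | Unrel => true
  | IncA => s
  | IncB => s && (k == T)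
  end.

Definition next_state (s : bool) (a : action) : bool :=
  match a with Unrel => s | _ => false end.

Section Game.
Variables (R : realFieldType) (n : nat) (lam : 'I_n -> R)
          (f fA fB : R) (T : nat).

Definition fee (a : action) : R :=
  match a with Unrel => f | IncA => fA | IncB => fB end.

(** A (state-based) strategy of a miner: the action she takes when selected
    in round k while the HTLC is in state s.  A profile gives one per miner. *)
Definition strategy := nat -> bool -> action.
Definition profile := 'I_n -> strategy.

Definition feasible_strategy (t : strategy) : Prop :=
  forall k s, (1 <= k <= T)%N -> feasible T k s (t k s).

Definition feasible_profile (sigma : profile) : Prop :=
  forall i, feasible_strategy (sigma i).

(** Expected tokens earned by miner [i] in the next [m] rounds, starting
    with round [k] in state [s]: each round miner j is selected w.p. lam j. *)
Fixpoint value (sigma : profile) (i : 'I_n) (m k : nat) (s : bool) : R :=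
  match m with
  | 0 => 0
  | m'.+1 =>
      \sum_(j < n) lam j *
        ((j == i)%:R * fee (sigma j k s)
         + value sigma i m' k.+1 (next_state s (sigma j k s)))
  end.

(** Expected payoff of miner [i] in the subgame G^H(k, s) (rounds k..T). *)
Definition payoff (sigma : profile) (i : 'I_n) (k : nat) (s : bool) : R :=
  value sigma i (T.+1 - k) k s.

Definition deviate (sigma : profile) (i : 'I_n) (t : strategy) : profile :=
  fun j => if j == i then t else sigma j.

Definition is_SPE (sigma : profile) : Prop :=
  feasible_profile sigma /\
  forall k s, (1 <= k <= T)%N ->
    forall (i : 'I_n) (t : strategy), feasible_strategy t ->
      payoff (deviate sigma i t) i k s <= payoff sigma i k s.

End Game.

Definition bribe_profile (n T : nat) : 'I_n -> nat -> bool -> action :=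
  fun _ k s => if (k == T) && s then IncB else Unrel.
Arguments bribe_profile : clear implicits.

From mathcomp Require Import all_boot all_order all_algebra.
From mathcomp Require Import ring lra zify.
Import Order.TTheory GRing.Theory Num.Theory.
Local Open Scope ring_scope.

(* Under the bribe profile the HTLC is untouched until round T, where tx_B is
   taken, so from round k < T a miner i collecting f now expects
   f + (T - k - 1) lam_i f + lam_i fB, whereas redeeming tx_A now yields
   fA + (T - k) lam_i f.  The bribe condition says fA - f < lmin (fB - f), so
   the first is strictly larger for every i, and in round T tx_B is simply the
   best fee.  Hence no one-shot deviation pays, which in a finite game means
   the profile is an SPE.
   Conversely, backward induction from round T shows that in any SPE the
   continuation after round k is the bribe profile, and then the strict
   inequalities force the bribe action in round k as well. *)

Section Game.
Variables (R : realFieldType) (n : nat) (lam : 'I_n -> R) (f fA fB : R)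
          (T : nat).

Local Notation F := (fee f fA fB).
Local Notation V := (value lam f fA fB).
Local Notation payoff := (payoff lam f fA fB T).

Lemma value_cons (sigma : profile n) i m k s :
  V sigma i m.+1 k s =
  lam i * (F (sigma i k s) + V sigma i m k.+1 (next_state s (sigma i k s)))
  + \sum_(j | j != i) lam j * V sigma i m k.+1 (next_state s (sigma j k s)).
Proof.
rewrite /= (bigD1 i) //= eqxx mul1r; congr (_ + _).
by apply: eq_bigr => j /negbTE ->; rewrite mul0r add0r.
Qed.

Lemma value_eq_local (sigma1 sigma2 : profile n) i m k s :
  (forall j k' s', (k <= k' < k + m)%N -> sigma1 j k' s' = sigma2 j k' s') ->
  V sigma1 i m k s = V sigma2 i m k s.
Proof.
elim: m k s => [//|m IH] k s eq12 /=.
apply: eq_bigr => j _.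
rewrite eq12 ?leqnn ?addnS ?ltnS ?leq_addr // (IH k.+1) // => j' k' s' hk'.
by apply: eq12; lia.
Qed.

Lemma value_symmetric_profile (sigma : profile n) i m k s :
  \sum_(j < n) lam j = 1 -> (forall j, sigma j = sigma i) ->
  V sigma i m.+1 k s =
  lam i * F (sigma i k s) + V sigma i m k.+1 (next_state s (sigma i k s)).
Proof.
move=> lam_sum sym; rewrite value_cons mulrDr -addrA; congr (_ + _).
rewrite -[RHS]mul1r -lam_sum mulr_suml [RHS](bigD1 i) //=; congr (_ + _).
by apply: eq_bigr => j _; rewrite sym.
Qed.

Hypothesis lam_pos : forall i, 0 < lam i.

Lemma one_shot_deviation_principle (sigma : profile n) i :
  (forall k s a, (1 <= k <= T)%N -> feasible T k s a ->
     F a + V sigma i (T - k) k.+1 (next_state s a)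
     <= F (sigma i k s)
        + V sigma i (T - k) k.+1 (next_state s (sigma i k s))) ->
  forall t, feasible_strategy T t -> forall k s, (1 <= k <= T)%N ->
    payoff (deviate sigma i t) i k s <= payoff sigma i k s.
Proof.
move=> no_gain t t_feas k s hk; rewrite /payoff.
have : (k + (T.+1 - k) = T.+1)%N by lia.
case/andP: hk => k_ge1 _.
move: (T.+1 - k)%N => m; elim: m k s k_ge1 => [//|m IH] k s k_ge1 hkm /=.
apply: ler_sum => j _; apply: ler_wpM2l; first exact: ltW.
have -> : deviate sigma i t j = if j == i then t else sigma j by [].
case: eqVneq => [->|_]; last by rewrite lerD2l IH //; lia.
rewrite /= !mul1r.
apply: (le_trans (y := F (t k s) + V sigma i m k.+1 (next_state s (t k s)))).
  by rewrite lerD2l IH //; lia.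
have -> : m = (T - k)%N by lia.
by apply: no_gain; [lia | apply: t_feas; lia].
Qed.

Lemma spe_no_one_shot_gain (sigma : profile n) j k s a :
  is_SPE lam f fA fB T sigma -> (1 <= k <= T)%N -> feasible T k s a ->
  F a + V sigma j (T - k) k.+1 (next_state s a)
  <= F (sigma j k s) + V sigma j (T - k) k.+1 (next_state s (sigma j k s)).
Proof.
move=> [sigma_feas sigma_spe] hk a_feas.
pose t k' s' := if (k' == k) && (s' == s) then a else sigma j k' s'.
have t_feas : feasible_strategy T t.
  move=> k' s' hk'; rewrite /t.
  by case: ifP => [/andP[/eqP -> /eqP ->] // | _]; apply: sigma_feas.
have later s' :
    V (deviate sigma j t) j (T - k) k.+1 s' = V sigma j (T - k) k.+1 s'.
  apply: value_eq_local => j' k' s'' hk'; rewrite /deviate /t.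
  by case: eqP => // ->; rewrite (_ : k' == k = false) //; apply/eqP; lia.
have dev_j : deviate sigma j t j k s = a by rewrite /deviate /t !eqxx.
have := sigma_spe k s hk j t t_feas; rewrite /payoff subSn; last by lia.
rewrite !value_cons dev_j later.
rewrite (eq_bigr (fun j' => lam j' * V sigma j (T - k) k.+1
                               (next_state s (sigma j' k s)))); last first.
  by move=> j' /negbTE ne; rewrite later /deviate ne.
by rewrite lerD2r ler_pM2l.
Qed.

Section Bribery.
Hypotheses (lam_sum : \sum_(i < n) lam i = 1)
           (fB_gt_f : f < fB) (fB_gt_fA : fA < fB)
           (bribe_gap : forall i, fA - f < lam i * (fB - f)).

Local Notation bribe := (bribe_profile n T).

Lemma bribe_profileE i k s :
  bribe i k s = if (k == T) && s then IncB else Unrel.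
Proof. by []. Qed.

Lemma bribe_feasible : feasible_profile T bribe.
Proof.
move=> i k s _; rewrite bribe_profileE.
by case: (k =P T) => [->|]; case: s; rewrite //= eqxx.
Qed.

Lemma bribe_value_redeemed i m k : V bribe i m k false = m%:R * (lam i * f).
Proof.
elim: m k => [|m IH] k; first by rewrite mul0r.
rewrite value_symmetric_profile // bribe_profileE andbF /= IH.
by rewrite mulrS mulrDl mul1r.
Qed.

Lemma bribe_value_redeemable i m k :
  (k + m = T)%N -> V bribe i m.+1 k true = m%:R * (lam i * f) + lam i * fB.
Proof.
elim: m k => [|m IH] k hk.
  rewrite value_symmetric_profile // bribe_profileE -hk addn0 eqxx /=.
  by rewrite addr0 mul0r add0r.
have k_neq_T : k == T = false by apply/eqP; lia.
rewrite value_symmetric_profile // bribe_profileE k_neq_T.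
rewrite [next_state _ _]/= IH; last by lia.
by rewrite [fee _ _ _ _]/= mulrS; ring.
Qed.

Lemma bribe_strict_best_response i k s a :
  (1 <= k <= T)%N -> feasible T k s a -> a != bribe i k s ->
  F a + V bribe i (T - k) k.+1 (next_state s a)
  < F (bribe i k s) + V bribe i (T - k) k.+1 (next_state s (bribe i k s)).
Proof.
move=> hk; rewrite bribe_profileE; case: s; last by rewrite andbF; case: a.
rewrite andbT; case: (eqVneq k T) => [->|k_neq_T] /=.
  by rewrite subnn; case: a => //= _ _; rewrite !addr0.
case: a => //=; last by rewrite (negbTE k_neq_T).
move=> _ _.
have [m hm] : exists m, (T - k = m.+1)%N by exists (T - k).-1; lia.
rewrite hm bribe_value_redeemed bribe_value_redeemable; last by lia.
have := bribe_gap i; rewrite mulrSr; lra.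
Qed.

Lemma bribe_is_SPE : is_SPE lam f fA fB T bribe.
Proof.
split; first exact: bribe_feasible.
move=> k s hk i t t_feas.
apply: (@one_shot_deviation_principle bribe i _ t t_feas k s hk).
move=> {hk}k {}s a hk a_feas.
have [->//|a_neq] := eqVneq a (bribe i k s).
exact/ltW/bribe_strict_best_response.
Qed.

Lemma spe_eq_bribe (sigma : profile n) :
  is_SPE lam f fA fB T sigma ->
  forall i k s, (1 <= k <= T)%N -> sigma i k s = bribe i k s.
Proof.
move=> sigma_spe; have [sigma_feas _] := sigma_spe.
suff agree m k : (1 <= k)%N -> (k + m = T.+1)%N ->
    forall i k' s, (k <= k' <= T)%N -> sigma i k' s = bribe i k' s.
  by move=> i k s hk; apply: (agree (T.+1 - k)%N k) => //; lia.
elim: m k => [|m IH] k k_ge1 hkm i k' s hk'; first by lia.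
have [<-|k_neq] := eqVneq k k'; last by apply: (IH k.+1) => //; lia.
have hk : (1 <= k <= T)%N by lia.
have continuation s' : V sigma i (T - k) k.+1 s' = V bribe i (T - k) k.+1 s'.
  by apply: value_eq_local => j k'' s'' hk''; apply: (IH k.+1); lia.
apply/eqP/negPn/negP => neq.
have := @spe_no_one_shot_gain sigma i k s _ sigma_spe hk
                               (bribe_feasible i k s hk).
rewrite !continuation; apply/negP; rewrite -ltNge.
exact: (@bribe_strict_best_response i k s _ hk (sigma_feas i k s hk) neq).
Qed.

End Bribery.
End Game.

Theorem theorem2 (R : realFieldType) (n : nat) (lam : 'I_n -> R) (lmin : R)
    (f fA fB vdep : R) (T : nat)
    (lam_pos : forall i, 0 < lam i)
    (lam_sum : \sum_(i < n) lam i = 1)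
    (lmin_le : forall i, lmin <= lam i)
    (lmin_att : exists i, lam i = lmin)
    (hfA : f < fA) (hfAv : fA < vdep)
    (hfB : f < fB) (hfBv : fB < vdep)
    (bribe : (fA - f) / lmin + f < fB) :
  is_SPE lam f fA fB T (bribe_profile n T) /\
  forall sigma : 'I_n -> nat -> bool -> action,
    is_SPE lam f fA fB T sigma ->
    forall (i : 'I_n) (k : nat) (s : bool), (1 <= k <= T)%N ->
      sigma i k s = bribe_profile n T i k s.
Proof.
have [i0 lam_i0] := lmin_att.
have lmin_gt0 : 0 < lmin by rewrite -lam_i0.
have lmin_le1 : lmin <= 1.
  rewrite -lam_sum (bigD1 i0) //= lam_i0 lerDl.
  by apply: sumr_ge0 => j _; apply: ltW.
have gap : forall i, fA - f < lam i * (fB - f).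
  move=> i; apply: (@lt_le_trans _ _ (lmin * (fB - f))).
    by rewrite mulrC -ltr_pdivrMr //; lra.
  by apply: ler_wpM2r; [rewrite subr_ge0 ltW | apply: lmin_le].
have fB_gt_fA : fA < fB.
  by have := gap i0; rewrite lam_i0; nra.
split; [exact: bribe_is_SPE | exact: spe_eq_bribe].
Qed.
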